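(* Let $H$ be a binary tree based graph, $M$ a pseudomatching of $H$ and $0\le\eta\le 1$. Let $S$ be a set of literals with $Vars(S)=V(H)\setminus\bigcup M$ that is $\eta$-comfortable w.r.t. $M$, and let $\varphi\in{\bf CNF}(M)$. Then $\Pr({\bf ES}(\varphi)\mid {\bf EC}(S))\le (2/3)^{\eta|M|}$.
   Context: Sets of literals never contain a variable together with its negation; $Vars(S)$ is the set of variables occurring in $S$. A rooted tree is extended if none of its leaves has a sibling. A graph $H$ is a binary tree based graph if it is the edge-disjoint union of extended rooted trees $T_1,\dots,T_m$ with roots $t_1,\dots,t_m$ such that every leaf of some $T_i$ is a leaf of exactly two of the trees, and any two trees have at most one common vertex, which is a leaf of both. Vertices of $H$ are root vertices (the $t_i$), leaf vertices (leaves of the trees) and internal vertices (the rest; each lies in exactly one tree). Two internal vertices are siblings if they are siblings in the tree containing them. $T_i,T_j$ are adjacent if they share a leaf $\ell_{i,j}$; $P_{i,j}$ is the path between $t_i$ and $t_j$ in $T_i\cup T_j$; $P^{1/2}_{i\to j}$ is the path in $T_i$ from $t_i$ to $\ell_{i,j}$. A pseudoedge is a pair $\{t_i,t_j\}$ with $T_i,T_j$ adjacent; a pseudomatching is a set of pairwise disjoint pseudoedges; $\bigcup M$ is the set of ends of pseudoedges in $M$. $\phi_H$ is the CNF on variables $V(H)$ with a clause $C_{i,j}$ (positive literals of $V(P_{i,j})$) for each pseudoedge. A set $S$ falsifies a clause if all its variables occur negatively in $S$. ${\bf CNF}(M)$ is the set of CNFs consisting, for each $\{t_i,t_j\}\in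 M$, of one clause that is either the disjunction of positive literals of $V(P^{1/2}_{i\to j})$ or of $V(P^{1/2}_{j\to i})$. $S$ respects a pseudoedge $\{t_i,t_j\}$ if all non-root variables of $C_{i,j}$ occur negatively in $S$ and the siblings of all internal variables of $C_{i,j}$ occur positively in $S$. $S$ is $\eta$-comfortable w.r.t. $M$ if $S$ falsifies no clause of $\phi_H$ and $S$ respects at least $\eta|M|$ pseudoedges of $M$. Probability space: ${\bf SAT}(H)$ is the set of satisfying assignments of $\phi_H$ (sets $S'$ with $Vars(S')=V(H)$ satisfying all clauses). The positive literal $\ell_{i,j}$ is fixed w.r.t. $S'$ if $\ell_{i,j}\in S'$ and all other variables of $C_{i,j}$ occur negatively in $S'$; $Fix(S')$ is the set of fixed literals. Each $S'\in{\bf SAT}(H)$ has probability $(1/2)^{|V(H)\setminus Fix(S')|}$. Events: ${\bf EC}(S)=\{S'\in{\bf SAT}(H): S\subseteq S'\}$; ${\bf ES}(\varphi)=\{S'\in{\bf SAT}(H): S'\text{ satisfies }\varphi\}$. *)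

From HB Require Import structures.
From mathcomp Require Import all_boot all_order all_algebra.
From mathcomp Require Import reals exp.

Set Implicit Arguments.
Unset Strict Implicit.
Unset Printing Implicit Defensive.

Import Order.TTheory GRing.Theory Num.Theory.
Local Open Scope ring_scope.

(* A family of m rooted trees on the vertex type V.                    *)
(*   par i : parent map of T_i (convention: par i (rt i) = rt i).      *)
Record tfam (V : finType) (m : nat) := TFam {
  VT  : 'I_m -> {set V};
  rt  : 'I_m -> V;
  par : 'I_m -> V -> V }.

Section TreeBased.
Variables (V : finType) (m : nat) (H : tfam V m).

Definition is_rooted_tree (i : 'I_m) : Prop :=
  [/\ rt H i \in VT H i,
      par H i (rt H i) = rt H i,
      forall v, v \in VT H i -> par H i v \in VT H i
    & forall v, v \in VT H i -> exists k, iter k (par H i) v = rt H i].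

Definition children (i : 'I_m) (u : V) : {set V} :=
  [set v in VT H i | (v != rt H i) && (par H i v == u)].

Definition leaf (i : 'I_m) (v : V) : bool :=
  [&& v \in VT H i, v != rt H i & children i v == set0].

Definition extended (i : 'I_m) : Prop :=
  forall l w, leaf i l -> w \in VT H i -> w != rt H i ->
    par H i w = par H i l -> w = l.

Definition binary_tree_based : Prop :=
  [/\ forall i, is_rooted_tree i,
      forall i, extended i,
      forall v, exists i, v \in VT H i,
      forall i l, leaf i l -> #|[set k | leaf k l]| = 2
    &
      forall i j, i != j ->
        (#|VT H i :&: VT H j| <= 1)%N /\
        (forall v, v \in VT H i -> v \in VT H j -> leaf i v && leaf j v)].
(* edge-disjointness follows from "at most one common vertex". *)

Definition isroot (v : V) : bool := v \in [set rt H i | i : 'I_m].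
Definition isleafv (v : V) : bool := [exists i, leaf i v].
Definition internal (v : V) : bool := ~~ isroot v && ~~ isleafv v.

Definition sibling (x w : V) : bool :=
  [&& x != w, internal w &
    [exists k, [&& x \in VT H k, w \in VT H k & par H k x == par H k w]]].

Definition pathV (i : 'I_m) (v : V) : {set V} :=
  [set x | [exists k : 'I_#|V|.+1, iter k (par H i) v == x]].

Definition adjacent (i j : 'I_m) : bool :=
  (i != j) && [exists l, leaf i l && leaf j l].

Definition Cvars (i j : 'I_m) : {set V} :=
  [set x | [exists l, [&& leaf i l, leaf j l &
                          (x \in pathV i l) || (x \in pathV j l)]]].

Definition halfV (i j : 'I_m) : {set V} :=
  [set x | [exists l, [&& leaf i l, leaf j l & x \in pathV i l]]].

(* a literal is (v, true) = v positive, or (v, false) = v negative *)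
Definition consistent (S : {set V * bool}) : bool :=
  [forall v, ~~ (((v, true) \in S) && ((v, false) \in S))].

Definition Vars (S : {set V * bool}) : {set V} := [set l.1 | l in S].

Definition posclause (X : {set V}) : {set V * bool} :=
  [set l : V * bool | l.2 && (l.1 \in X)].

Definition falsifies (S C : {set V * bool}) : bool :=
  [forall l in C, (l.1, ~~ l.2) \in S].

Definition satisfies (S : {set V * bool}) (phi : {set {set V * bool}}) : bool :=
  [forall C in phi, [exists l in C, l \in S]].

Definition phiH : {set {set V * bool}} :=
  [set posclause (Cvars ij.1 ij.2) |
     ij in [set ij : 'I_m * 'I_m | adjacent ij.1 ij.2]].

(* pseudoedges {t_i,t_j} are represented by the index pairs {i,j} *)
Definition pseudoedge (e : {set 'I_m}) : bool :=
  [exists i, exists j, adjacent i j && (e == [set i; j])].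

Definition pseudomatching (M : {set {set 'I_m}}) : bool :=
  [forall e in M, pseudoedge e] && trivIset M.

Definition coverM (M : {set {set 'I_m}}) : {set V} :=
  [set rt H i | i in cover M].

Definition respects_ij (S : {set V * bool}) (i j : 'I_m) : bool :=
  [forall x in Cvars i j, ~~ isroot x ==> ((x, false) \in S)] &&
  [forall x in Cvars i j, internal x ==>
     [forall w, sibling x w ==> ((w, true) \in S)]].

Definition respects (S : {set V * bool}) (e : {set 'I_m}) : bool :=
  [exists i, exists j, [&& e == [set i; j], adjacent i j & respects_ij S i j]].

Definition comfortable (R : realType) (eta : R) (S : {set V * bool})
    (M : {set {set 'I_m}}) : Prop :=
  (forall C, C \in phiH -> ~~ falsifies S C) /\
  eta * (#|M|%:R) <= (#|[set e in M | respects S e]|%:R : R).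

Definition inCNF (M : {set {set 'I_m}}) (phi : {set {set V * bool}}) : Prop :=
  exists c : {set 'I_m} -> {set V * bool},
    (forall e, e \in M -> exists i j, e = [set i; j] /\ adjacent i j /\
        (c e = posclause (halfV i j) \/ c e = posclause (halfV j i))) /\
    phi = [set c e | e in M].

Definition SATH : {set {set V * bool}} :=
  [set S' | [&& consistent S', Vars S' == setT & satisfies S' phiH]].

Definition FixV (S' : {set V * bool}) : {set V} :=
  [set l | ((l, true) \in S') &&
     [exists i, exists j, [&& adjacent i j, leaf i l, leaf j l &
        [forall x in Cvars i j, (x != l) ==> ((x, false) \in S')]]]].

Definition weight (R : realType) (S' : {set V * bool}) : R :=
  (2^-1) ^+ #|~: FixV S'|.

Definition Pr (R : realType) (A : {set {set V * bool}}) : R :=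
  \sum_(S' in SATH :&: A) weight R S'.

Definition condPr (R : realType) (A B : {set {set V * bool}}) : R :=
  Pr R (A :&: B) / Pr R B.

Definition EC (S : {set V * bool}) : {set {set V * bool}} :=
  [set S' in SATH | S \subset S'].

Definition ES (phi : {set {set V * bool}}) : {set {set V * bool}} :=
  [set S' in SATH | satisfies S' phi].

End TreeBased.

From HB Require Import structures.
From mathcomp Require Import all_boot all_order all_algebra.
From mathcomp Require Import reals exp.
From mathcomp Require Import ring.
Import Order.TTheory GRing.Theory Num.Theory.

Set Implicit Arguments.
Unset Strict Implicit.
Unset Printing Implicit Defensive.

(** Fix a respected pseudoedge {t_i, t_j} of M and look at the satisfying
   assignments extending S.  All non-root variables of C_{i,j} are negative in S,
   so C_{i,j} forces t_i or t_j to be positive: the assignments fall into three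
   classes according to the values (1,1), (1,0), (0,1) of (t_i, t_j).  Resetting
   these two values is a bijection between the classes which preserves the
   clauses of phi_H, the fixed literals (hence the weight) and the clauses of
   phi coming from the other pseudoedges of M; this is where respecting is
   used, since every other clause through t_i or t_j contains a sibling that S
   sets positive.  The clause of phi for {t_i, t_j} holds on exactly two of the
   three classes, so conditioning on it multiplies the weight by 2/3, and the
   pseudoedges respected by S contribute one such factor each. *)

Section TreeBased.
Variables (V : finType) (m : nat) (H : tfam V m).
Hypothesis HB : binary_tree_based H.

Lemma rt_VT i : rt H i \in VT H i.
Proof. by case: HB => /(_ i) []. Qed.

Lemma par_rt i : par H i (rt H i) = rt H i.
Proof. by case: HB => /(_ i) []. Qed.

Lemma iter_par_VT i v n : v \in VT H i -> iter n (par H i) v \in VT H i.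
Proof.
case: HB => /(_ i) [_ _ par_VT _] _ _ _ _ vi.
by elim: n => //= n IHn; apply: par_VT.
Qed.

Lemma iter_par_rt i v : v \in VT H i -> exists n, iter n (par H i) v = rt H i.
Proof. by case: HB => /(_ i) [_ _ _ reach] *; apply: reach. Qed.

Lemma leaf_VT i v : leaf H i v -> v \in VT H i.
Proof. by case/and3P. Qed.

Lemma rt_VT_eq i k : rt H i \in VT H k -> k = i.
Proof.
move=> rtk; apply/eqP; apply: contraT => ki.
case: HB => _ _ _ _ /(_ k i ki) [_ /(_ _ rtk (rt_VT i)) /andP[_ /and3P[_]]].
by rewrite eqxx.
Qed.

Lemma leaf_neq_rt i k v : leaf H k v -> v != rt H i.
Proof.
move=> kv; apply/eqP => vi; rewrite vi in kv.
by move: (kv); rewrite (rt_VT_eq (leaf_VT kv)) /leaf eqxx andbF.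
Qed.

Lemma leaf_nisroot k v : leaf H k v -> ~~ isroot H v.
Proof.
by move=> kv; apply/imsetP => -[i _ vi]; move: (leaf_neq_rt i kv); rewrite vi eqxx.
Qed.

Lemma isrootP x : reflect (exists i, x = rt H i) (isroot H x).
Proof. by apply: (iffP imsetP) => [[i _ ->]|[i ->]]; exists i. Qed.

Lemma internal_nleaf k x : internal H x -> ~~ leaf H k x.
Proof. by case/andP => _; apply: contra => kx; apply/existsP; exists k. Qed.

Lemma VT_internal i y :
  y \in VT H i -> y != rt H i -> ~~ leaf H i y -> internal H y.
Proof.
move=> yi yr yleaf; apply/andP; split.
  by apply/isrootP => -[k yk]; move: yi yr; rewrite yk => /rt_VT_eq ->; rewrite eqxx.
apply/existsP => -[k ky]; have [ik|ik] := eqVneq i k; first by rewrite ik ky in yleaf.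
case: HB => _ _ _ _ /(_ i k ik) [_ /(_ _ yi (leaf_VT ky)) /andP[iy _]].
by rewrite iy in yleaf.
Qed.

Lemma leaf_sibling_eq i l w : leaf H i l -> w \in VT H i -> w != rt H i ->
  par H i w = par H i l -> w = l.
Proof. by case: HB => _ /(_ i) ext *; apply: ext. Qed.

Lemma leaf_tree3 i j k l : leaf H i l -> leaf H j l -> leaf H k l -> i != j ->
  (k == i) || (k == j).
Proof.
move=> il jl kl ij; case: HB => _ _ _ /(_ i l il) card2 _.
have ijl : [set i; j] = [set k | leaf H k l].
  by apply/eqP; rewrite eqEcard card2 cards2 ij andbT; apply/subsetP => x;
    rewrite !inE => /orP[] /eqP ->.
have : k \in [set k | leaf H k l] by rewrite inE.
by rewrite -ijl !inE.
Qed.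

Lemma pathVP i v x :
  reflect (exists n, iter n (par H i) v = x) (x \in pathV H i v).
Proof.
rewrite inE; apply: (iffP existsP) => [[k /eqP <-]|[n <-]]; first by exists k.
have vn := fconnect_iter (par H i) n v.
have ltV : findex (par H i) v (iter n (par H i) v) < #|V|.+1.
  by rewrite ltnS ltnW // (leq_trans (findex_max vn)) ?max_card.
by exists (Ordinal ltV); rewrite iter_findex.
Qed.

Lemma pathV_VT i v x : v \in VT H i -> x \in pathV H i v -> x \in VT H i.
Proof. by move=> vi /pathVP [n <-]; apply: iter_par_VT. Qed.

Lemma rt_pathV i v : v \in VT H i -> rt H i \in pathV H i v.
Proof. by move=> vi; apply/pathVP; apply: iter_par_rt. Qed.

Lemma pathV_id i v : v \in pathV H i v.
Proof. by apply/pathVP; exists 0%N. Qed.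

Lemma rt_pathV_eq i k l : leaf H k l -> rt H i \in pathV H k l -> k = i.
Proof. by move=> kl /(pathV_VT (leaf_VT kl)) /rt_VT_eq. Qed.

Lemma leaf_pathV_eq i x w : leaf H i x -> w \in VT H i -> x \in pathV H i w -> x = w.
Proof.
move=> ix wi /pathVP [[|n] //= xn]; set u := iter n (par H i) w in xn.
have [ur|ur] := eqVneq u (rt H i).
  by move: (leaf_neq_rt i ix); rewrite -xn ur par_rt eqxx.
case/and3P: ix => _ _ /eqP/setP/(_ u).
by rewrite !inE iter_par_VT // ur xn eqxx.
Qed.

Lemma Cvars_sym i j : Cvars H i j = Cvars H j i.
Proof.
apply/setP => x; rewrite !inE.
by apply/existsP/existsP => -[l /and3P[il jl lx]]; exists l; rewrite il jl orbC.
Qed.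

Lemma adjacent_sym i j : adjacent H i j = adjacent H j i.
Proof.
rewrite /adjacent eq_sym; congr (_ && _).
by apply/existsP/existsP => -[l /andP[il jl]]; exists l; rewrite il jl.
Qed.

Lemma respects_ij_sym S i j : respects_ij H S i j = respects_ij H S j i.
Proof. by rewrite /respects_ij Cvars_sym. Qed.

Lemma rt_Cvars i j : adjacent H i j -> (rt H i \in Cvars H i j) && (rt H j \in Cvars H i j).
Proof.
case/andP => _ /existsP[l /andP[il jl]]; rewrite !inE.
by apply/andP; split; apply/existsP; exists l;
  rewrite il jl !rt_pathV ?orbT ?(leaf_VT il) ?(leaf_VT jl).
Qed.

Lemma leaves_branch i l l' : leaf H i l -> leaf H i l' -> l != l' ->
  exists c y, [/\ c \in pathV H i l, y \in pathV H i l', internal H c & sibling H c y].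
Proof.
move=> il il' ll'; set f := par H i; set P := pathV H i l.
have lV := leaf_VT il; have l'V := leaf_VT il'.
have l'P : exists n, iter n f l' \in P.
  by have [n n_rt] := iter_par_rt l'V; exists n; rewrite n_rt rt_pathV.
case: (ex_minnP l'P) => -[|n] zP n_min.
  by move: ll'; rewrite (leaf_pathV_eq il' lV zP) eqxx.
set y := iter n f l' in zP; set z := f y in zP.
have yP : y \notin P by apply: contraT => /negPn /n_min; rewrite ltnn.
have yV : y \in VT H i by apply: iter_par_VT.
have yr : y != rt H i by apply: contraNneq yP => ->; rewrite rt_pathV.
have lz : exists a, iter a f l == z by case/pathVP: zP => a az; exists a; apply/eqP.
case: (ex_minnP lz) => -[/= /eqP lz0|a /eqP cz a_min].
  by case/and3P: il => _ _ /eqP/setP/(_ y); rewrite !inE yV yr lz0 eqxx.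
(* [c] and [y] are the children, on the paths from [l] and [l'], of the vertex [z]
   where the path from [l'] first meets the path from [l]; being siblings in an
   extended tree, neither is a leaf. *)
set c := iter a f l in cz.
have cV : c \in VT H i by apply: iter_par_VT.
have cP : c \in P by apply/pathVP; exists a.
have cy : c != y by apply: contraNneq yP => <-.
have cr : c != rt H i.
  apply/eqP => crt; suff : a < a by rewrite ltnn.
  by apply: a_min; rewrite -/c -cz /= -/c crt /f par_rt.
have internal_of w w' : w \in VT H i -> w != rt H i ->
    w' \in VT H i -> w' != rt H i -> w != w' -> f w = f w' -> internal H w.
  move=> wV wr w'V w'r ww' fw; apply: VT_internal wV wr _; apply: contra ww' => iw.
  by rewrite (leaf_sibling_eq iw w'V w'r (esym fw)).
exists c, y; split => //.
- by apply/pathVP; exists n.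
- exact: internal_of cV cr yV yr cy cz.
- rewrite /sibling cy (internal_of _ _ yV yr cV cr) 1?eq_sym //=.
  by apply/existsP; exists i; rewrite cV yV; apply/eqP.
Qed.

Lemma respects_ij_branch S i j k l' : respects_ij H S i j -> adjacent H i j ->
  leaf H i l' -> leaf H k l' -> k != i -> k != j ->
  exists2 y, y \in pathV H i l' & internal H y && ((y, true) \in S).
Proof.
move=> /andP[_ /forall_inP resp] /andP[ij /existsP[l /andP[il jl]]] il' kl' ki kj.
have ll' : l != l'.
  apply/eqP => ll'; subst l'.
  by have := leaf_tree3 il jl kl' ij; rewrite (negbTE ki) (negbTE kj).
have [c [y [cl yl' ci cy]]] := leaves_branch il il' ll'.
have cC : c \in Cvars H i j by rewrite inE; apply/existsP; exists l; rewrite il jl cl.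
exists y => //; move/implyP: (resp c cC) => /(_ ci) /forallP /(_ y) /implyP /(_ cy) ->.
by case/and3P: cy => _ ->.
Qed.

Lemma respects_ij_Cvars S i j k l : respects_ij H S i j -> adjacent H i j ->
  adjacent H k l -> rt H i \in Cvars H k l ->
  Cvars H k l = Cvars H i j \/
  exists2 y, y \in Cvars H k l & internal H y && ((y, true) \in S).
Proof.
move=> resp ij.
wlog [l' [kl' ll' il']]: k l /
    exists l', [/\ leaf H k l', leaf H l l' & rt H i \in pathV H k l'].
  move=> sym kl ikl; move: (ikl); rewrite inE => /existsP[l' /and3P[kl' ll' /orP[ik|il]]].
    by apply: sym => //; exists l'.
  rewrite Cvars_sym; apply: (sym l k); first by exists l'.
    by rewrite adjacent_sym.
  by rewrite Cvars_sym.
move=> kl _; have ki := rt_pathV_eq kl' il'; subst k.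
have [lj|lj] := eqVneq l j; first by left; rewrite lj.
have li : l != i by rewrite eq_sym; case/andP: kl.
have [y yl' y_pos] := respects_ij_branch resp ij kl' ll' li lj.
by right; exists y; rewrite // inE; apply/existsP; exists l'; rewrite kl' ll' yl'.
Qed.

Lemma Cvars_rt k i j : rt H k \in Cvars H i j -> (k == i) || (k == j).
Proof.
rewrite inE => /existsP[l /and3P[il jl /orP[/(rt_pathV_eq il)|/(rt_pathV_eq jl)] ->]].
  by rewrite eqxx.
by rewrite eqxx orbT.
Qed.

Lemma halfV_rt k i j : rt H k \in halfV H i j -> k = i.
Proof. by rewrite inE => /existsP[l /and3P[il _ /(rt_pathV_eq il)/esym]]. Qed.
End TreeBased.

Local Open Scope ring_scope.

Section Literals.
Variable V : finType.
Implicit Types (X : {set V * bool}) (v : V).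

Lemma consistent_neg X v : consistent X -> (v, true) \in X -> (v, false) \notin X.
Proof. by move=> /forallP /(_ v); rewrite negb_and => /orP[/negPf->|]. Qed.

Lemma consistent_memE X v a c : consistent X -> (v, a) \in X -> ((v, c) \in X) = (c == a).
Proof.
move=> cX va; case: (eqVneq c a) => [-> //|]; case: a c va => -[] // va _.
  exact: negbTE (consistent_neg cX va).
by apply/negP => /(consistent_neg cX); rewrite va.
Qed.

Lemma VarsP X v : reflect (exists b, (v, b) \in X) (v \in Vars X).
Proof.
by apply: (iffP imsetP) => [[[w b] wb /= ->]|[b vb]]; [exists b | exists (v, b)].
Qed.

Lemma lit_negE X v : consistent X -> Vars X = setT ->
  ((v, false) \in X) = ((v, true) \notin X).
Proof.
move=> cX VX; have /VarsP [[] vb] : v \in Vars X by rewrite VX inE.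
  by rewrite vb (negPf (consistent_neg cX vb)).
by rewrite vb; apply/esym/negP => /(consistent_neg cX); rewrite vb.
Qed.

Lemma in_posclause (A : {set V}) l : (l \in posclause A) = l.2 && (l.1 \in A).
Proof. by rewrite inE. Qed.

End Literals.

Section Weights.
Variables (V : finType) (m : nat) (H : tfam V m) (R : realType).

Definition wsum (A : {set {set V * bool}}) : R := \sum_(X in A) weight H R X.

Implicit Types (X : {set V * bool}) (A B : {set {set V * bool}}).

Lemma weight_ge0 X : 0 <= weight H R X.
Proof. by rewrite /weight exprn_ge0 // invr_ge0 ler0n. Qed.

Lemma wsum_ge0 A : 0 <= wsum A.
Proof. by apply: sumr_ge0 => X _; apply: weight_ge0. Qed.

Lemma le_wsum A B : A \subset B -> wsum A <= wsum B.
Proof.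
move=> AB; rewrite [wsum B](big_setID A) /= (setIidPr AB) lerDl.
by apply: sumr_ge0 => X _; apply: weight_ge0.
Qed.
End Weights.

Section Reroot.
Variables (V : finType) (m : nat) (H : tfam V m).
Hypothesis HB : binary_tree_based H.
Variables (S : {set V * bool}) (i j : 'I_m).
Hypotheses (resp : respects_ij H S i j) (ij : adjacent H i j).
Implicit Types (X Y : {set V * bool}).

Definition off_roots (x : V) := (x != rt H i) && (x != rt H j).

Definition agree_off X Y := forall l, off_roots l.1 -> (l \in X) = (l \in Y).

Definition reroot (a b : bool) X : {set V * bool} :=
  [set l in X | off_roots l.1] :|: [set (rt H i, a); (rt H j, b)].

Hypothesis S_off : forall l, l \in S -> off_roots l.1.

Lemma respects_ij_neg x : x \in Cvars H i j -> ~~ isroot H x -> (x, false) \in S.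
Proof. by case/andP: resp => /forall_inP nonroot_neg _ /nonroot_neg /implyP. Qed.

Lemma rt_neq : rt H i != rt H j.
Proof.
case/andP: ij => ij' _; apply: contra ij' => /eqP ri.
by rewrite (rt_VT_eq HB (_ : rt H j \in VT H i)) // -ri rt_VT.
Qed.

Lemma off_rootsPn x : ~~ off_roots x -> x = rt H i \/ x = rt H j.
Proof. by rewrite negb_and !negbK => /orP[] /eqP; [left|right]. Qed.

Lemma leaf_off_roots k v : leaf H k v -> off_roots v.
Proof. by move=> kv; rewrite /off_roots !(leaf_neq_rt HB _ kv). Qed.

Lemma Cvars_off_roots k l x : adjacent H k l -> x \in Cvars H k l -> ~~ off_roots x ->
  Cvars H k l = Cvars H i j \/
  exists2 y, y \in Cvars H k l & internal H y && ((y, true) \in S).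
Proof.
move=> kl kx /off_rootsPn [xr|xr]; rewrite xr in kx; first exact: respects_ij_Cvars.
rewrite [Cvars H i j]Cvars_sym; apply: (respects_ij_Cvars HB _ _ kl kx).
  by rewrite respects_ij_sym.
by rewrite adjacent_sym.
Qed.

Lemma FixV_agree X Y : consistent X -> S \subset X -> agree_off X Y ->
  {subset FixV H X <= FixV H Y}.
Proof.
move=> cX SX XY v; rewrite !inE => /andP[vX /existsP[k /existsP[l]]].
case/and4P=> kl kv lv /forall_inP others_neg; have v_off := leaf_off_roots kv.
rewrite -XY // vX; apply/existsP; exists k; apply/existsP; exists l.
rewrite kl kv lv; apply/forall_inP => x kx; apply/implyP => xv.
have [x_off|x_on] := boolP (off_roots x).
  by rewrite -XY //; apply: (implyP (others_neg x kx)).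
have vC : v \in Cvars H k l by rewrite inE; apply/existsP; exists v; rewrite kv lv pathV_id.
exfalso; case: (Cvars_off_roots kl kx x_on) => [kl_ij|[y ky /andP[yi yS]]].
  move: (consistent_neg cX vX); rewrite (subsetP SX) //.
  by rewrite respects_ij_neg -?kl_ij // (leaf_nisroot HB kv).
have yv : y != v by apply: contraTneq kv => <-; apply: internal_nleaf.
by move: (consistent_neg cX (subsetP SX _ yS)); rewrite (implyP (others_neg y ky)).
Qed.

Lemma phiH_agree X Y : satisfies X (phiH H) -> agree_off X Y -> S \subset Y ->
  ((rt H i, true) \in Y) || ((rt H j, true) \in Y) -> satisfies Y (phiH H).
Proof.
move=> /forall_inP X_sat XY SY rtY; apply/forall_inP => _ /imsetP[[k l] kl_in ->].
have /exists_inP[[x b] + xX] := X_sat _ (imset_f _ kl_in).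
rewrite inE /= in kl_in; rewrite in_posclause /= => /andP[b_true kx].
move: b_true xX => -> xX {b}; apply/exists_inP.
have [x_off|x_on] := boolP (off_roots x).
  by exists (x, true); [rewrite in_posclause | rewrite -XY].
case: (Cvars_off_roots kl_in kx x_on) => [->|[y ky /andP[_ yS]]]; last first.
  by exists (y, true); [rewrite in_posclause | apply: (subsetP SY)].
have /andP[iC jC] := rt_Cvars HB ij.
by case/orP: rtY => rtY; [exists (rt H i, true) | exists (rt H j, true)];
  rewrite // in_posclause.
Qed.

Lemma in_reroot a b X l : (l \in reroot a b X) =
  [|| (l \in X) && off_roots l.1, l == (rt H i, a) | l == (rt H j, b)].
Proof. by rewrite !inE. Qed.

Lemma reroot_agree a b X : agree_off X (reroot a b X).
Proof.
move=> [v c] /= v_off; rewrite in_reroot /= v_off andbT -!pair_eqE /=.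
by case/andP: v_off => /negPf-> /negPf->; rewrite !orbF.
Qed.

Lemma reroot_rt a b X x c : ~~ off_roots x ->
  ((x, c) \in reroot a b X) = ((x, c) == (rt H i, a)) || ((x, c) == (rt H j, b)).
Proof. by move=> /negPf x_on; rewrite in_reroot /= x_on andbF. Qed.

Lemma reroot_consistent a b X : consistent X -> consistent (reroot a b X).
Proof.
move=> cX; apply/forallP => v; apply/negP => /andP[].
have [v_off|v_on] := boolP (off_roots v).
  by rewrite -!reroot_agree // => /(consistent_neg cX)/negP.
rewrite !reroot_rt // -!pair_eqE /=.
have ji := rt_neq; rewrite eq_sym in ji.
by case/off_rootsPn: v_on => ->; rewrite eqxx ?(negPf rt_neq) ?(negPf ji); case: a b => -[].
Qed.

Lemma reroot_Vars a b X : Vars X = setT -> Vars (reroot a b X) = setT.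
Proof.
move=> VX; apply/setP => v; rewrite inE; apply/VarsP.
have [v_off|/off_rootsPn [->|->]] := boolP (off_roots v).
- have /VarsP [c vc] : v \in Vars X by rewrite VX inE.
  by exists c; rewrite -reroot_agree.
- by exists a; rewrite in_reroot eqxx orbT.
- by exists b; rewrite in_reroot eqxx !orbT.
Qed.

Lemma reroot_sub a b X : S \subset X -> S \subset reroot a b X.
Proof. by move=> /subsetP SX; apply/subsetP => l lS; rewrite -reroot_agree ?SX ?S_off. Qed.

Lemma reroot_mem a b X : ((rt H i, a) \in reroot a b X) && ((rt H j, b) \in reroot a b X).
Proof. by rewrite !in_reroot !eqxx !orbT. Qed.

Lemma rerootK a b a' b' X : consistent X -> (rt H i, a) \in X -> (rt H j, b) \in X ->
  reroot a b (reroot a' b' X) = X.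
Proof.
move=> cX ia jb; apply/setP => -[v c].
have [v_off|v_on] := boolP (off_roots v); first by rewrite -!reroot_agree.
have ji := rt_neq; rewrite eq_sym in ji.
rewrite reroot_rt // -!pair_eqE /=.
case/off_rootsPn: v_on => ->; rewrite eqxx ?(negPf rt_neq) ?(negPf ji) /= ?orbF.
  by rewrite (consistent_memE _ cX ia).
by rewrite (consistent_memE _ cX jb).
Qed.

Lemma SATH_rt X : X \in SATH H -> S \subset X ->
  ((rt H i, true) \in X) || ((rt H j, true) \in X).
Proof.
rewrite inE => /and3P[cX _ /forall_inP X_sat] SX.
have ij_in : (i, j) \in [set kl : 'I_m * 'I_m | adjacent H kl.1 kl.2] by rewrite inE.
have /exists_inP[[x c]] := X_sat _ (imset_f _ ij_in).
rewrite in_posclause /= => /andP[c_true x_ij] xX; move: c_true xX => -> xX.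
have [/isrootP [k xk]|x_nroot] := boolP (isroot H x).
  by rewrite xk in x_ij xX; case/orP: (Cvars_rt HB x_ij) => /eqP <-; rewrite xX ?orbT.
by move: (consistent_neg cX xX); rewrite (subsetP SX) ?respects_ij_neg.
Qed.

Lemma reroot_SATH a b X : X \in SATH H -> S \subset X -> a || b -> reroot a b X \in SATH H.
Proof.
move=> /[dup] XH; rewrite inE => /and3P[cX /eqP VX X_sat] SX ab.
rewrite inE reroot_consistent // reroot_Vars // eqxx /=.
apply: phiH_agree X_sat (reroot_agree a b X) (reroot_sub a b SX) _.
have /andP[ia jb] := reroot_mem a b X.
by case: a b ab ia jb => -[] // _ ia jb; rewrite ?ia ?jb ?orbT.
Qed.

Lemma reroot_weight (R : realType) a b X : consistent X -> S \subset X ->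
  weight H R (reroot a b X) = weight H R X.
Proof.
move=> cX SX; rewrite /weight; congr (_ ^+ #|~: _|); apply/setP => v; apply/idP/idP.
  have back : agree_off (reroot a b X) X.
    by move=> l l_off; rewrite (reroot_agree a b X l_off).
  exact: FixV_agree (reroot_consistent a b cX) (reroot_sub a b SX) back v.
exact: FixV_agree cX SX (reroot_agree a b X) v.
Qed.

Lemma halfV_satE X : consistent X -> S \subset X ->
  [exists l in posclause (halfV H i j), l \in X] = ((rt H i, true) \in X).
Proof.
move=> cX SX; apply/exists_inP/idP => [[[x c]]|iX]; last first.
  exists (rt H i, true) => //; rewrite in_posclause inE.
  case/andP: ij => _ /existsP[l /andP[il jl]].
  by apply/existsP; exists l; rewrite il jl rt_pathV ?(leaf_VT il).
rewrite in_posclause /= => /andP[c_true x_half] xX; move: c_true xX => -> xX.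
have [/isrootP [k xk]|x_nroot] := boolP (isroot H x).
  by rewrite xk in x_half xX; rewrite -(halfV_rt HB x_half).
move: x_half; rewrite inE => /existsP[l /and3P[il jl xl]].
have x_ij : x \in Cvars H i j by rewrite inE; apply/existsP; exists l; rewrite il jl xl.
by move: (consistent_neg cX xX); rewrite (subsetP SX) ?respects_ij_neg.
Qed.

Lemma agree_exists X Y (C : {set V * bool}) : agree_off X Y ->
  (forall l, l \in C -> off_roots l.1) ->
  [exists l in C, l \in X] -> [exists l in C, l \in Y].
Proof.
by move=> XY C_off /exists_inP[l lC lX]; apply/exists_inP; exists l; rewrite // -XY ?C_off.
Qed.

(* [Om] will be EC(S) cut down by the clauses of the other pseudoedges of M. *)
Section RootClasses.
Variables (R : realType) (Om : {set {set V * bool}}).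
Hypothesis Om_reroot : forall X, X \in Om ->
  [/\ X \in SATH H, S \subset X & forall a b, a || b -> reroot a b X \in Om].

Definition root_class a b := [set X in Om | ((rt H i, a) \in X) && ((rt H j, b) \in X)].

Lemma root_classP a b X : X \in root_class a b ->
  [/\ X \in Om, consistent X, S \subset X, (rt H i, a) \in X & (rt H j, b) \in X].
Proof.
rewrite inE => /and3P[XOm ia jb]; have [+ SX _] := Om_reroot XOm.
by rewrite inE => /and3P[cX _ _].
Qed.

Lemma reroot_root_class a b a' b' : a || b -> a' || b' ->
  reroot a' b' @: root_class a b = root_class a' b'.
Proof.
move=> ab ab'; apply/setP => Y; apply/imsetP/idP => [[X /root_classP[XOm _ _ _ _] ->]|].
  by rewrite inE reroot_mem andbT; case: (Om_reroot XOm) => _ _ ->.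
move=> /[dup] /root_classP[YOm cY _ ia' jb'] _; exists (reroot a b Y); last by rewrite rerootK.
by rewrite inE reroot_mem andbT; case: (Om_reroot YOm) => _ _ ->.
Qed.

Lemma wsum_root_class a b : a || b ->
  wsum H R (root_class a b) = wsum H R (root_class true true).
Proof.
move=> ab; rewrite -(reroot_root_class (a' := true) (b' := true) ab isT) /wsum big_imset /=.
  by apply: eq_bigr => X /root_classP[_ cX SX _ _]; rewrite reroot_weight.
move=> X Y /root_classP[_ cX _ iX jX] /root_classP[_ cY _ iY jY] XY.
by rewrite -(rerootK true true cX iX jX) XY rerootK.
Qed.

Lemma Om_lit_negE X v : X \in Om -> ((v, false) \in X) = ((v, true) \notin X).
Proof. by case/Om_reroot; rewrite inE => /and3P[cX /eqP VX _] _ _; apply: lit_negE. Qed.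

Lemma wsum_rt_true :
  wsum H R [set X in Om | (rt H i, true) \in X] = wsum H R (root_class true true) *+ 2.
Proof.
rewrite /wsum (big_setID [set X : {set V * bool} | (rt H j, true) \in X]) /=.
rewrite -!/(wsum H R _) mulr2n.
congr (wsum H R _ + _); first by apply/setP => X; rewrite !inE andbA.
rewrite -(wsum_root_class (a:=true) (b:=false)) //; congr (wsum H R _).
apply/setP => X; rewrite !inE; case XOm: (X \in Om); rewrite ?andbF //=.
by rewrite Om_lit_negE // andbC.
Qed.

Lemma wsum_Om : wsum H R Om = wsum H R (root_class true true) *+ 3.
Proof.
rewrite /wsum (big_setID [set X : {set V * bool} | (rt H i, true) \in X]) /= -!/(wsum H R _).
rewrite (_ : Om :&: _ = [set X in Om | (rt H i, true) \in X]); last first.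
  by apply/setP => X; rewrite !inE.
rewrite (_ : Om :\: _ = root_class false true); last first.
  apply/setP => X; rewrite !inE; case XOm: (X \in Om); rewrite ?andbF //=.
  have [XH SX _] := Om_reroot XOm.
  have := SATH_rt XH SX; rewrite Om_lit_negE //.
  by case: ((rt H i, true) \in X) => //= ->.
by rewrite wsum_rt_true (wsum_root_class (a:=false) (b:=true)) // -mulrSr.
Qed.

Lemma wsum_rt_true_ratio :
  wsum H R [set X in Om | (rt H i, true) \in X] = wsum H R Om * (2 / 3).
Proof. by rewrite wsum_rt_true wsum_Om; field. Qed.
End RootClasses.
End Reroot.

Lemma forall_in_setU1 (T : finType) (x : T) (A : {set T}) (P : pred T) :
  [forall y in x |: A, P y] = P x && [forall y in A, P y].
Proof.
apply/forall_inP/andP => [Pall|[Px /forall_inP PA] y].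
  split; first by apply: Pall; rewrite setU11.
  by apply/forall_inP => y yA; apply: Pall; rewrite setU1r.
by rewrite in_setU1 => /predU1P[->|/PA].
Qed.

Lemma set2_eq (T : finType) (i j k l : T) : [set i; j] = [set k; l] -> k != l ->
  (k = i /\ l = j) \/ (k = j /\ l = i).
Proof.
move=> ij_kl; have kin : k \in [set i; j] by rewrite ij_kl set21.
have lin : l \in [set i; j] by rewrite ij_kl set22.
by case/set2P: kin => ->; case/set2P: lin => ->; rewrite ?eqxx //; [left|right].
Qed.

Section Conditioning.
Variables (R : realType) (V : finType) (m : nat) (H : tfam V m).
Hypothesis HB : binary_tree_based H.
Variables (M : {set {set 'I_m}}) (S : {set V * bool}) (c : {set 'I_m} -> {set V * bool}).
Hypotheses (M_pm : pseudomatching H M) (S_vars : Vars S = setT :\: coverM H M).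
Hypothesis c_CNF : forall e, e \in M -> exists i j, e = [set i; j] /\ adjacent H i j /\
  (c e = posclause (halfV H i j) \/ c e = posclause (halfV H j i)).

Implicit Types (Q : {set {set 'I_m}}) (X : {set V * bool}).

Definition EC_clauses (Q : {set {set 'I_m}}) : {set {set V * bool}} :=
  [set X in EC H S | [forall e in Q, [exists l in c e, l \in X]]].

Lemma in_EC_clauses Q X : (X \in EC_clauses Q) =
  [&& X \in SATH H, S \subset X & [forall e in Q, [exists l in c e, l \in X]]].
Proof. by rewrite inE [X \in EC H S]inE -andbA. Qed.

Lemma S_off_roots e i j : e \in M -> e = [set i; j] ->
  forall l, l \in S -> off_roots H i j l.1.
Proof.
move=> eM e_ij l lS; have : l.1 \in Vars S by apply/imsetP; exists l.
rewrite S_vars in_setD in_setT andbT => l_out.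
have cover_rt k : k \in e -> rt H k \in coverM H M.
  by move=> ke; apply: imset_f; apply/bigcupP; exists e.
by apply/andP; split; apply: contraNneq l_out => ->; apply: cover_rt;
  rewrite e_ij !inE eqxx ?orbT.
Qed.

Lemma clause_off_roots e e' i j : e \in M -> e = [set i; j] -> e' \in M -> e' != e ->
  forall l, l \in c e' -> off_roots H i j l.1.
Proof.
move=> eM e_ij e'M e'e [x b] /= x_ce'.
have [i' [j' [e'_ij [_ ce']]]] := c_CNF e'M.
have [k ke' [l' x_half]] : exists2 k, k \in e' & exists l', x \in halfV H k l'.
  case: ce' x_ce' => ->; rewrite in_posclause /= => /andP[_ x_half].
    by exists i'; [rewrite e'_ij set21 | exists j'].
  by exists j'; [rewrite e'_ij set22 | exists i'].
have /trivIsetP disj := (andP M_pm).2.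
have k_e := disjointFr (disj _ _ e'M eM e'e) ke'.
by apply/andP; split; apply: contraFneq k_e => xr; rewrite xr in x_half;
  rewrite -(halfV_rt HB x_half) e_ij !inE eqxx ?orbT.
Qed.

Lemma EC_clauses_reroot Q e i j : e \in M -> e = [set i; j] -> Q \subset M ->
  e \notin Q -> respects_ij H S i j -> adjacent H i j -> forall X, X \in EC_clauses Q ->
  [/\ X \in SATH H, S \subset X &
       forall a b, a || b -> reroot H i j a b X \in EC_clauses Q].
Proof.
move=> eM e_ij QM eQ resp ij X; rewrite in_EC_clauses => /and3P[XH SX /forall_inP X_sat].
have S_off := S_off_roots eM e_ij; split => // a b ab.
rewrite in_EC_clauses (reroot_SATH HB resp ij S_off) // reroot_sub //=.
apply/forall_inP => e' e'Q.
have e'e : e' != e by apply: contraNneq eQ => <-.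
have e'_off := clause_off_roots eM e_ij (subsetP QM _ e'Q) e'e.
exact: agree_exists (reroot_agree a b X) e'_off (X_sat _ e'Q).
Qed.

Lemma wsum_EC_clauses_setU1 Q e :
  e \in M -> respects H S e -> Q \subset M -> e \notin Q ->
  wsum H R (EC_clauses (e |: Q)) = wsum H R (EC_clauses Q) * (2 / 3).
Proof.
move=> eM /existsP[i0 /existsP[j0 /and3P[/eqP e_ij0 _ resp0]]] QM eQ.
have [i [j [e_ij [ij ce]]]] := c_CNF eM.
have resp : respects_ij H S i j.
  case/andP: ij => ij' _; case: (set2_eq (etrans (esym e_ij0) e_ij) ij') => -[-> ->] //.
  by rewrite respects_ij_sym.
wlog {ce} ce : i j e_ij ij resp / c e = posclause (halfV H i j).
  move=> oriented; case: ce => ce; first exact: oriented ce.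
  by apply: (oriented j i); rewrite 1?setUC 1?adjacent_sym 1?respects_ij_sym.
rewrite (_ : EC_clauses _ = [set X in EC_clauses Q | (rt H i, true) \in X]).
  exact/wsum_rt_true_ratio/(EC_clauses_reroot eM e_ij QM eQ resp ij)/(S_off_roots eM e_ij).
apply/setP => X; rewrite inE !in_EC_clauses forall_in_setU1 ce.
case XH: (X \in SATH H) => //=; case SX: (S \subset X) => //=.
have cX : consistent X by move: XH; rewrite inE => /and3P[].
by rewrite (halfV_satE HB resp ij cX SX) andbC.
Qed.

Lemma EC_clauses0 : EC_clauses set0 = EC H S.
Proof.
apply/setP => X; rewrite [in LHS]inE.
suff -> : [forall e in set0, [exists l in c e, l \in X]] by rewrite andbT.
by apply/forall_inP => e; rewrite inE.
Qed.

Lemma ES_EC_sub_EC_clauses Q : Q \subset M ->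
  ES H [set c e | e in M] :&: EC H S \subset EC_clauses Q.
Proof.
move=> QM; apply/subsetP => X /setIP[].
rewrite [X \in ES _ _]inE => /andP[_ /forall_inP X_sat].
rewrite in_EC_clauses [X \in EC _ _]inE => /andP[-> ->] /=.
by apply/forall_inP => e eQ; apply/X_sat/imset_f/(subsetP QM).
Qed.

Lemma wsum_EC_clauses_respected Q : Q \subset [set e in M | respects H S e] ->
  wsum H R (EC_clauses Q) = (2 / 3) ^+ #|Q| * wsum H R (EC H S).
Proof.
move Qn: #|Q| => n; elim: n Q Qn => [|n IHn] Q Qn Q_resp.
  by rewrite (cards0_eq Qn) EC_clauses0 expr0 mul1r.
have [e eQ] : exists e, e \in Q by apply/set0Pn; rewrite -card_gt0 Qn.
have Q'_resp : Q :\ e \subset [set e in M | respects H S e].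
  exact: subset_trans (subsetDl _ _) Q_resp.
have Q'M : Q :\ e \subset M.
  by apply/subsetP => x /(subsetP Q'_resp); rewrite inE => /andP[].
have /setIdP[eM e_resp] := subsetP Q_resp e eQ.
rewrite -(setD1K eQ) wsum_EC_clauses_setU1 ?setD11 // IHn //; last first.
  by move: Qn; rewrite (cardsD1 e) eQ => -[].
by rewrite exprSr mulrAC.
Qed.
End Conditioning.

Lemma expr_le_powR (R : realType) (a x : R) n :
  0 < a <= 1 -> x <= n%:R -> a ^+ n <= a `^ x.
Proof.
move=> a01 xn; rewrite -powR_mulrn; first by have := ger_powR a01 xn.
by case/andP: a01 => /ltW.
Qed.

Lemma ler_div_of_le (R : numFieldType) (a b k : R) :
  0 <= b -> 0 <= k -> a <= k * b -> a / b <= k.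
Proof.
move=> b0 k0 le_ab; have [->|b_neq0] := eqVneq b 0; first by rewrite invr0 mulr0.
by rewrite ler_pdivrMr // lt0r b_neq0.
Qed.

Theorem theorem7 (R : realType) (V : finType) (m : nat) (H : tfam V m)
    (M : {set {set 'I_m}}) (eta : R) (S : {set V * bool})
    (phi : {set {set V * bool}}) :
  binary_tree_based H ->
  pseudomatching H M ->
  0 <= eta <= 1 ->
  consistent S ->
  Vars S = setT :\: coverM H M ->
  comfortable H eta S M ->
  inCNF H M phi ->
  condPr H R (ES H phi) (EC H S) <= (2 / 3 : R) `^ (eta * #|M|%:R).
Proof.
move=> HB M_pm _ _ S_vars [_ many_resp] [c [c_CNF ->]].
set Resp := [set e in M | respects H S e] in many_resp.
have Resp_M : Resp \subset M by apply/subsetP => e; rewrite inE => /andP[].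
have ES_EC_sub := subset_trans (subsetIr (SATH H) _) (ES_EC_sub_EC_clauses H S c Resp_M).
have EC_SATH : EC H S \subset SATH H by apply/subsetP => X; rewrite inE => /andP[].
have two_thirds : 0 < (2 / 3 : R) <= 1 by rewrite divr_gt0 ?ler_pdivrMr ?mul1r ?ler_nat.
apply: le_trans (expr_le_powR two_thirds many_resp).
rewrite /condPr /Pr (setIidPr EC_SATH); apply: ler_div_of_le.
- exact: wsum_ge0.
- by rewrite exprn_ge0 // ltW //; case/andP: two_thirds.
- apply: le_trans (le_wsum H R ES_EC_sub) _.
  by rewrite (wsum_EC_clauses_respected R HB M_pm S_vars c_CNF (subxx _)).
Qed.
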